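(* Let $\bm{\mu}\in X^{\mathcal{L}(\mathcal{T})}$ and let $d_s(\bm{\mu})$ and $\bm{w}^s(\bm{\mu})$ be computed by the recursive formula described in the context (for any admissible choices of $c^*(s)$ and of the arbitrary vectors). Then for every node $s\in S$, \[d_s(\bm{\mu})=\max_{\bm{w}\in\Delta_s}\inf_{\bm{\lambda}\in\mathrm{Alt}_s(\bm{\mu})}\sum_{\ell\in\mathcal{D}(s)}w_\ell d(\mu_\ell,\lambda_\ell),\] and $\bm{w}^s(\bm{\mu})$ attains this maximum.
   Context: $\mathcal{T}$ is a finite rooted tree with node set $S$, root $s_0$, children sets $\mathcal{C}(s)$, leaf set $\mathcal{L}(\mathcal{T})$ (nodes without children), and $\mathcal{D}(s)$ the set of leaves descending from $s$ ($\{s\}$ for a leaf). Internal nodes have labels $L(s)\in\{\text{MAX},\text{MIN}\}$. $X\subseteq\mathbb{R}$ is the mean-parameter set of a one-parameter exponential family, $d(x,y)$ the KL divergence between its members with means $x$ and $y$, $\theta\in X$ a threshold. For $\bm{\lambda}$ with coordinates indexed by (a superset of) $\mathcal{D}(s)$: $V_s(\bm{\lambda})=\lambda_s$ at a leaf, $\max_{c\in\mathcal{C}(s)}V_c(\bm{\lambda})$ if $L(s)=$MAX, $\min_{c}V_c(\bm{\lambda})$ if MIN; $a_s(\bm{\lambda})=$'win' iff $V_s(\bm{\lambda})\ge\theta$, else 'lose'. $\Delta_s=\{(w_\ell)_{\ell\in\mathcal{D}(s)}:w_\ell\ge0,\sum w_\ell=1\}$ and $\mathrm{Alt}_s(\bm{\mu})=\{\bm{\lambda}\in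 X^{\mathcal{D}(s)}:a_s(\bm{\lambda})\neq a_{s_0}(\bm{\mu})\}$. Recursive formula: let $a^*=a_{s_0}(\bm{\mu})$, and $P=$MAX, $Q=$MIN if $a^*=$'win', $P=$MIN, $Q=$MAX if $a^*=$'lose'. Bottom-up: for a leaf $s$: $w^s_s=1$; $d_s=d(\mu_s,\theta)$ if ($a^*=$'win' and $\mu_s\ge\theta$) or ($a^*=$'lose' and $\mu_s<\theta$), otherwise $d_s=0$. If $L(s)=P$: $d_s=\max_{c\in\mathcal{C}(s)}d_c$; choose $c^*(s)\in\arg\max_c d_c$; if $d_s>0$, $w^s_\ell=w^{c^*(s)}_\ell$ for $\ell\in\mathcal{D}(c^*(s))$ and $w^s_\ell=0$ for $\ell\in\mathcal{D}(c)$, $c\ne c^*(s)$. If $L(s)=Q$ and $d_c>0$ for all $c\in\mathcal{C}(s)$: $d_s=1/\sum_{c}(1/d_c)$ and $w^s_\ell=\frac{w^c_\ell/d_c}{\sum_{c'\in\mathcal{C}(s)}1/d_{c'}}$ for $\ell\in\mathcal{D}(c)$, $c\in\mathcal{C}(s)$. If $L(s)=Q$ and some $d_c=0$: $d_s=0$. For any internal $s$ with $d_s=0$, $\bm{w}^s$ is an arbitrary element of $\Delta_s$. (All $d_c,w^c$ are evaluated at $\bm{\mu}$.) *)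

From HB Require Import structures.
From mathcomp Require Import all_boot all_order all_algebra.
From mathcomp Require Import all_classical all_reals all_analysis.
Set Implicit Arguments. Unset Strict Implicit. Unset Printing Implicit Defensive.
Import Order.TTheory GRing.Theory Num.Theory.
Import numFieldNormedType.Exports.
Local Open Scope classical_set_scope.
Local Open Scope ring_scope.

(* A regular one-parameter exponential family is described by its
   log-partition function [b] on its natural parameter space [Th] (an open,
   nonempty interval); [b] is twice differentiable there with [b'' > 0]
   (non-degenerate family).  The mean of the member with natural parameter
   [t] is [b'(t)]; the mean-parameter set is X = b'(Th). *)
Definition expfam (R : realType) (Th : set R) (b : R -> R) : Prop :=
  [/\ open Th, Th !=set0,
      (forall x y z, Th x -> Th y -> x <= z <= y -> Th z) &
      [/\
      (forall t, Th t -> derivable b t 1),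
      (forall t, Th t -> derivable (derive1 b) t 1) &
      (forall t, Th t -> 0 < derive1 (derive1 b) t)]].

Definition meanset (R : realType) (Th : set R) (b : R -> R) : set R :=
  [set derive1 b t | t in Th].

Definition natpar (R : realType) (Th : set R) (b : R -> R) (x : R) : R :=
  xget 0 [set t | Th t /\ derive1 b t = x].

(* d(x,y) = KL( P_x || P_y ) between the members with means x and y:
   KL(P_{t1} || P_{t2}) = b(t2) - b(t1) - b'(t1) (t2 - t1). *)
Definition KL (R : realType) (Th : set R) (b : R -> R) (x y : R) : R :=
  let tx := natpar Th b x in let ty := natpar Th b y in
  b ty - b tx - x * (ty - tx).

(* Leaves carry a label in L (the coordinate of mu they refer to);
   internal nodes carry a label: true = MAX, false = MIN. *)
Inductive tree (L : Type) : Type :=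
| Leaf of L
| Node of bool & seq (tree L).

Arguments Leaf {L}.
Arguments Node {L}.

Fixpoint leaves (L : Type) (t : tree L) : seq L :=
  match t with
  | Leaf l => [:: l]
  | Node _ cs => flatten (map (@leaves L) cs)
  end.

Fixpoint wf_tree (L : Type) (t : tree L) : bool :=
  match t with
  | Leaf _ => true
  | Node _ cs => ~~ nilp cs && all (@wf_tree L) cs
  end.

Definition dtree (L : Type) : tree L := Node true [::].

Inductive subtree (L : Type) : tree L -> tree L -> Prop :=
| sub_refl t : subtree t t
| sub_child s b cs (i : nat) : (i < size cs)%N ->
    subtree s (nth (dtree L) cs i) -> subtree s (Node b cs).


Fixpoint Vval (R : realType) (L : Type) (t : tree L) (lam : L -> R) : R :=
  match t with
  | Leaf l => lam l
  | Node m cs =>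
      match map (fun c => Vval c lam) cs with
      | [::] => 0
      | v :: vs => foldr (fun x acc => if m then Num.max x acc else Num.min x acc) v vs
      end
  end.

Definition wins (R : realType) (L : Type) (theta : R) (t : tree L) (lam : L -> R) : bool :=
  theta <= Vval t lam.

Definition Delta (R : realType) (L : eqType) (s : tree L) : set (L -> R) :=
  [set w | (forall l, l \in leaves s -> 0 <= w l) /\ \sum_(l <- leaves s) w l = 1].

(* Alt_s(mu), with astar = a_{s0}(mu) *)
Definition Alt (R : realType) (L : eqType) (X : set R) (theta : R) (astar : bool)
  (s : tree L) : set (L -> R) :=
  [set lam | (forall l, l \in leaves s -> X (lam l)) /\ wins theta s lam != astar].

Definition inf_alt (R : realType) (L : eqType) (X : set R) (dist : R -> R -> R)
  (theta : R) (astar : bool) (mu : L -> R) (s : tree L) (w : L -> R) : \bar R :=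
  ereal_inf [set (\sum_(l <- leaves s) w l * dist (mu l) (lam l))%:E
            | lam in Alt X theta astar s].

(* [Rec s ds ws]: ds, ws are a possible output (d_s, w^s) of the recursion at
   node s; only the coordinates ws l with l in D(s) are specified.
   P = MAX iff astar = win, i.e. a node with label m is a P-node iff m = astar. *)
Section Recursion.
Variables (R : realType) (L : eqType) (dist : R -> R -> R) (mu : L -> R)
          (theta : R) (astar : bool).

Inductive Rec : tree L -> R -> (L -> R) -> Prop :=
| Rec_leaf l ds ws :
    ds = (if (theta <= mu l) == astar then dist (mu l) theta else 0) ->
    ws l = 1 ->
    Rec (Leaf l) ds ws
| Rec_P m cs dcs wcs ds ws (i : nat) :
    m = astar ->
    size dcs = size cs -> size wcs = size cs ->
    (forall j, (j < size cs)%N ->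
       Rec (nth (dtree L) cs j) (nth 0 dcs j) (nth (fun _ => 0) wcs j)) ->
    (* d_s = max_c d_c, attained at c*(s) = the i-th child *)
    (i < size cs)%N -> nth 0 dcs i = ds ->
    (forall j, (j < size cs)%N -> nth 0 dcs j <= ds) ->
    (if 0 < ds then
       (forall l, l \in leaves (nth (dtree L) cs i) -> ws l = nth (fun _ => 0) wcs i l) /\
       (forall j, (j < size cs)%N -> j != i ->
          forall l, l \in leaves (nth (dtree L) cs j) -> ws l = 0)
     else Delta (Node m cs) ws) ->
    Rec (Node m cs) ds ws
| Rec_Q m cs dcs wcs ds ws :
    m != astar ->
    size dcs = size cs -> size wcs = size cs ->
    (forall j, (j < size cs)%N ->
       Rec (nth (dtree L) cs j) (nth 0 dcs j) (nth (fun _ => 0) wcs j)) ->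
    (if all (fun x => 0 < x) dcs then
       ds = 1 / (\sum_(x <- dcs) 1 / x) /\
       (forall j, (j < size cs)%N -> forall l, l \in leaves (nth (dtree L) cs j) ->
          ws l = (nth (fun _ => 0) wcs j l / nth 0 dcs j) / (\sum_(x <- dcs) 1 / x))
     else ds = 0 /\ Delta (Node m cs) ws) ->
    Rec (Node m cs) ds ws.
End Recursion.

From HB Require Import structures.
From mathcomp Require Import all_boot all_order all_algebra.
From mathcomp Require Import all_classical all_reals all_analysis.
From mathcomp Require Import ring lra.
Set Implicit Arguments. Unset Strict Implicit. Unset Printing Implicit Defensive.
Import Order.TTheory GRing.Theory Num.Theory.
Import numFieldNormedType.Exports.
Local Open Scope classical_set_scope.
Local Open Scope ring_scope.

(* The max-min value is established through a saddle-point statement proved by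
   induction along the recursion: [w^s] guarantees cost at least [d_s] against
   every alternative of [s], while every weight vector [w] admits alternatives of
   cost at most [d_s * sum w + eps].  At a leaf this is the monotonicity of
   [d(mu_l, .)] on each side of [mu_l]: the cheapest flip moves [lambda_l] to (just
   past) [theta].  An alternative at a P-node must flip every child, so costs add
   up and all weight goes to a child of largest [d_c]; at a Q-node flipping one
   child suffices, so the adversary attacks a child minimising [d_c] times the mass
   of [w] on it, and weights proportional to [1/d_c] equalise these, which gives
   the harmonic value [1 / sum_c 1/d_c]. *)

Section FlattenNth.
Variable T : eqType.
Implicit Types (ss : seq (seq T)) (x : T).

Lemma mem_flatten_nth ss k x :
  (k < size ss)%N -> x \in nth [::] ss k -> x \in flatten ss.
Proof. by move=> hk hx; apply/flattenP; exists (nth [::] ss k); rewrite ?mem_nth. Qed.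

Lemma uniq_flatten_nth ss k : uniq (flatten ss) -> (k < size ss)%N -> uniq (nth [::] ss k).
Proof.
elim: ss k => [|s ss IH] [|k] //=; rewrite cat_uniq => /and3P[us _ uss] hk //.
exact: IH.
Qed.

Lemma uniq_flatten_nth_disjoint ss j k x : uniq (flatten ss) ->
  (j < size ss)%N -> (k < size ss)%N ->
  x \in nth [::] ss j -> x \in nth [::] ss k -> j = k.
Proof.
elim: ss j k => [|s ss IH] [|j] [|k] //=; rewrite cat_uniq => /and3P[_ hs uss] hj hk xj xk.
- by case/hasP: hs; exists x => //; exact: mem_flatten_nth xk.
- by case/hasP: hs; exists x => //; exact: mem_flatten_nth xj.
- by rewrite (IH j k).
Qed.
End FlattenNth.

Definition tree_nth_ind (L : Type) (P : tree L -> Prop)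
  (P_leaf : forall l, P (Leaf l))
  (P_node : forall m cs, (forall j, (j < size cs)%N -> P (nth (dtree L) cs j)) ->
     P (Node m cs)) :
  forall t, P t :=
  fix F t := match t with
  | Leaf l => P_leaf l
  | Node m cs => P_node m cs
     ((fix G (cs : seq (tree L)) : forall j, (j < size cs)%N -> P (nth (dtree L) cs j) :=
        match cs with
        | [::] => fun j H => False_ind _ (Bool.diff_false_true H)
        | c :: cs' => fun j => match j with
                      | 0 => fun _ => F c
                      | j'.+1 => fun H => G cs' j' H end
        end) cs)
  end.

Section TreeLeaves.
Variable L : eqType.
Implicit Types (m : bool) (cs : seq (tree L)) (l : L).
Local Notation child cs j := (nth (dtree L) cs j).

Lemma nth_map_leaves cs j : (j < size cs)%N ->
  nth [::] (map (@leaves L) cs) j = leaves (child cs j).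
Proof. exact: nth_map. Qed.

Lemma sub_leaves_child m cs j : (j < size cs)%N ->
  {subset leaves (child cs j) <= leaves (Node m cs)}.
Proof.
by move=> hj l hl; apply: (@mem_flatten_nth _ _ j); rewrite ?size_map ?nth_map_leaves.
Qed.

Lemma mem_leaves_node m cs l : l \in leaves (Node m cs) ->
  exists2 j, (j < size cs)%N & l \in leaves (child cs j).
Proof.
elim: cs => [|c cs IH] //=; rewrite mem_cat => /orP[hl|/IH[j hj hl]].
  by exists 0%N.
by exists j.+1.
Qed.

Lemma uniq_leaves_child m cs j : uniq (leaves (Node m cs)) -> (j < size cs)%N ->
  uniq (leaves (child cs j)).
Proof. by move=> u hj; rewrite -nth_map_leaves //; apply: uniq_flatten_nth; rewrite ?size_map. Qed.

Lemma leaves_child_disjoint m cs j k l : uniq (leaves (Node m cs)) ->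
  (j < size cs)%N -> (k < size cs)%N ->
  l \in leaves (child cs j) -> l \in leaves (child cs k) -> j = k.
Proof.
move=> u hj hk; rewrite -!nth_map_leaves //.
by apply: uniq_flatten_nth_disjoint; rewrite ?size_map.
Qed.

Lemma find_leaves_child m cs j l : uniq (leaves (Node m cs)) -> (j < size cs)%N ->
  l \in leaves (child cs j) -> find (fun c => l \in leaves c) cs = j.
Proof.
move=> u hj hl.
have has_l : has (fun c => l \in leaves c) cs by apply/(has_nthP (dtree L)); exists j.
have found : (find (fun c => l \in leaves c) cs < size cs)%N by rewrite -has_find.
exact: leaves_child_disjoint u found hj (nth_find (dtree L) has_l) hl.
Qed.

Lemma wf_child m cs j : wf_tree (Node m cs) -> (j < size cs)%N -> wf_tree (child cs j).
Proof. by case/andP=> _ /all_nthP; apply. Qed.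

Lemma wf_node_size m cs : wf_tree (Node m cs) -> (0 < size cs)%N.
Proof. by case: cs. Qed.

Lemma big_leaves_node (R : realType) m cs (F : L -> R) :
  \sum_(l <- leaves (Node m cs)) F l =
  \sum_(j < size cs) \sum_(l <- leaves (child cs j)) F l.
Proof. by rewrite big_flatten /= big_map (big_nth (dtree L)) big_mkord. Qed.

Lemma subtree_wf_uniq (s t : tree L) : subtree s t -> wf_tree t -> uniq (leaves t) ->
  [/\ wf_tree s, uniq (leaves s) & {subset leaves s <= leaves t}].
Proof.
elim=> [t'|s' m cs i hi _ IH] wf u; first by split.
have [wfs us sub] := IH (wf_child wf hi) (uniq_leaves_child u hi).
by split=> // l /sub; apply: sub_leaves_child.
Qed.

Lemma eq_Vval (R : realType) (s : tree L) (f g : L -> R) :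
  {in leaves s, f =1 g} -> Vval s f = Vval s g.
Proof.
elim/tree_nth_ind: s => [l|m cs IH] fg /=; first by apply: fg; rewrite inE.
congr (match _ with [::] => _ | v :: vs => _ end).
apply: (@eq_from_nth _ 0); rewrite ?size_map // => j hj.
by rewrite !(nth_map (dtree L)) //; apply: IH => // l /(sub_leaves_child m hj); apply: fg.
Qed.

Lemma le_foldr_max (R : realType) (x v : R) vs :
  (x <= foldr Num.max v vs) = (x <= v) || has (fun y => x <= y) vs.
Proof. by elim: vs => [|y vs IH] /=; rewrite ?orbF // le_max IH orbCA. Qed.

Lemma le_foldr_min (R : realType) (x v : R) vs :
  (x <= foldr Num.min v vs) = (x <= v) && all (fun y => x <= y) vs.
Proof. by elim: vs => [|y vs IH] /=; rewrite ?andbT // le_min IH andbCA. Qed.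

Lemma wins_node (R : realType) (theta : R) m cs (lam : L -> R) : (0 < size cs)%N ->
  wins theta (Node m cs) lam =
  if m then has (fun c => wins theta c lam) cs else all (fun c => wins theta c lam) cs.
Proof.
case: cs => [|c cs] // _; rewrite /wins /=.
by case: m; [rewrite le_foldr_max has_map | rewrite le_foldr_min all_map].
Qed.

Lemma wins_node_neq (R : realType) (theta : R) (A : bool) m cs (lam : L -> R) :
  (0 < size cs)%N ->
  (wins theta (Node m cs) lam != A) =
  if m == A then all (fun c => wins theta c lam != A) cs
  else has (fun c => wins theta c lam != A) cs.
Proof.
move=> cs0; rewrite wins_node // {cs0}.
by case: m; case: A; elim: cs => [|c cs IH] //=; case: (wins theta c lam).
Qed.
End TreeLeaves.

Lemma exists_le_harmonic (R : realFieldType) n (d W : 'I_n -> R) : (0 < n)%N ->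
  (forall j, 0 < d j) -> exists k, d k * W k * \sum_j (d j)^-1 <= \sum_j W j.
Proof.
move=> n0 d0.
case: (boolP [exists k, d k * W k * \sum_j (d j)^-1 <= \sum_j W j]).
  by case/existsP=> k hk; exists k.
move=> /existsPn H.
have lt_sum : \sum_j (\sum_i W i) * (d j)^-1 < \sum_j W j * \sum_i (d i)^-1.
  apply: ltr_sum => [|j _]; first by apply/hasP; exists (Ordinal n0); rewrite ?mem_index_enum.
  by rewrite ltr_pdivrMr // mulrAC [W j * _]mulrC ltNge; apply: H.
by move: lt_sum; rewrite -mulr_sumr -mulr_suml ltxx.
Qed.

Section MaxMinValue.
Variables (R : realType) (L : eqType) (X : set R) (D : R -> R -> R) (mu : L -> R)
  (theta : R) (A : bool).
Hypothesis D_xx : forall x, D x x = 0.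
Hypothesis D_ge0 : forall x y, X x -> X y -> 0 <= D x y.
Hypothesis D_threshold_le : forall x y, X x -> X y ->
  (theta <= x) == A -> (theta <= y) != A -> D x theta <= D x y.
Hypothesis D_threshold_approx : forall x (eps : R), X x -> 0 < eps -> (theta <= x) == A ->
  exists y, [/\ X y, (theta <= y) != A & D x y <= D x theta + eps].

Local Notation alt := (Alt X theta A).
Local Notation mass s w := (\sum_(l <- leaves s) w l).

Definition cost (s : tree L) (w lam : L -> R) := \sum_(l <- leaves s) w l * D (mu l) (lam l).

Definition value_ge s (ws : L -> R) (ds : R) := forall lam, alt s lam -> ds <= cost s ws lam.

Definition value_le s ds := forall (w : L -> R) (eps : R),
  {in leaves s, forall l, 0 <= w l} -> 0 < eps ->
  exists2 lam, alt s lam & cost s w lam <= ds * mass s w + eps.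

Definition optimal s (ds : R) (ws : L -> R) := [/\ Delta s ws, value_ge s ws ds & value_le s ds].

Lemma cost_ge0 s w lam : {in leaves s, forall l, X (mu l)} ->
  {in leaves s, forall l, 0 <= w l} -> {in leaves s, forall l, X (lam l)} ->
  0 <= cost s w lam.
Proof.
move=> Xmu w0 Xlam; rewrite /cost big_seq; apply: sumr_ge0 => l hl.
by apply: mulr_ge0; [apply: w0 | apply: D_ge0; [apply: Xmu | apply: Xlam]].
Qed.

Lemma value_ge_nonpos s ws ds : {in leaves s, forall l, X (mu l)} ->
  ds <= 0 -> Delta s ws -> value_ge s ws ds.
Proof. by move=> Xmu ds0 [ws0 _] lam [Xlam _]; apply: le_trans ds0 (cost_ge0 _ _ _). Qed.

Lemma optimal_leaf l ds ws : X (mu l) ->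
  ds = (if (theta <= mu l) == A then D (mu l) theta else 0) -> ws l = 1 ->
  optimal (Leaf l) ds ws.
Proof.
move=> Xl -> wl; split.
- by split=> [l'|]; rewrite ?big_seq1 // inE => /eqP ->; rewrite wl.
- move=> lam [Xlam lam_alt]; rewrite /cost /= big_seq1 wl mul1r.
  have Xy : X (lam l) by apply: Xlam; rewrite inE.
  by case: ifP => h; [exact: D_threshold_le | exact: D_ge0].
- move=> w eps w0 eps0; rewrite /= !big_seq1.
  have wl0 : 0 <= w l by apply: w0; rewrite inE.
  case: ifP => h; last first.
    exists mu; first by split=> [l' /[!inE] /eqP -> //|]; rewrite /wins /= h.
    by rewrite /cost /= big_seq1 D_xx mulr0 mul0r add0r ltW.
  (* slack [eps / (w l + 1)] keeps [w l] times the slack below [eps] *)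
  have e0 : 0 < eps / (w l + 1) by rewrite divr_gt0 // ltr_wpDl.
  have [y [Xy yA Dy]] := D_threshold_approx Xl e0 h.
  exists (fun=> y); first by split.
  have eE : eps / (w l + 1) * (w l + 1) = eps by rewrite divfK // gt_eqF // ltr_wpDl.
  rewrite /cost /= big_seq1; nra.
Qed.

Section Node.
Variables (m : bool) (cs : seq (tree L)).
Hypotheses (wf_node : wf_tree (Node m cs)) (uniq_node : uniq (leaves (Node m cs)))
  (X_mu : {in leaves (Node m cs), forall l, X (mu l)}).
Local Notation node := (Node m cs).
Local Notation n := (size cs).
Local Notation child j := (nth (dtree L) cs j).

Lemma cost_node w lam : cost node w lam = \sum_(j < n) cost (child j) w lam.
Proof. exact: big_leaves_node. Qed.

Lemma cost_child_le j w lam : (j < n)%N -> {in leaves node, forall l, 0 <= w l} ->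
  {in leaves node, forall l, X (lam l)} -> cost (child j) w lam <= cost node w lam.
Proof.
move=> hj w0 Xlam; rewrite cost_node (bigD1 (Ordinal hj)) //= lerDl.
apply: sumr_ge0 => k _; have sub := sub_leaves_child m (ltn_ord k).
by apply: cost_ge0; [exact: (sub_in1 sub X_mu) | exact: (sub_in1 sub w0) |
                     exact: (sub_in1 sub Xlam)].
Qed.

Lemma alt_child_P lam j : m = A -> alt node lam -> (j < n)%N -> alt (child j) lam.
Proof.
move=> mA [Xlam]; rewrite wins_node_neq ?(wf_node_size wf_node) // mA eqxx.
move=> /(all_nthP (dtree L)) alt_all hj.
by split; [exact: (sub_in1 (sub_leaves_child m hj) Xlam) | exact: alt_all].
Qed.

Lemma alt_child_Q lam : m != A -> alt node lam -> exists2 j, (j < n)%N & alt (child j) lam.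
Proof.
move=> mA [Xlam]; rewrite wins_node_neq ?(wf_node_size wf_node) // (negbTE mA).
move=> /(has_nthP (dtree L))[j hj alt_j]; exists j => //.
by split; [exact: (sub_in1 (sub_leaves_child m hj) Xlam) | exact: alt_j].
Qed.

Definition glue (f : nat -> L -> R) l := f (find (fun c => l \in leaves c) cs) l.

Lemma glueE f j : (j < n)%N -> {in leaves (child j), glue f =1 f j}.
Proof. by move=> hj l hl; rewrite /glue (find_leaves_child uniq_node hj hl). Qed.

Lemma cost_glue w f : cost node w (glue f) = \sum_(j < n) cost (child j) w (f j).
Proof.
rewrite cost_node; apply: eq_bigr => j _; apply: eq_big_seq => l hl.
by rewrite (glueE _ (ltn_ord j)).
Qed.

Lemma alt_glue f : m = A -> (forall j, (j < n)%N -> alt (child j) (f j)) -> alt node (glue f).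
Proof.
move=> mA alt_f; split.
  move=> l /mem_leaves_node[j hj hl]; rewrite (glueE _ hj hl).
  by case: (alt_f j hj) => + _; apply.
rewrite wins_node_neq ?(wf_node_size wf_node) // mA eqxx; apply/(all_nthP (dtree L)) => j hj.
by rewrite /wins (eq_Vval (glueE f hj)); case: (alt_f j hj).
Qed.

Definition deviate k (lam : L -> R) l := if l \in leaves (child k) then lam l else mu l.

Lemma cost_deviate k w lam : (k < n)%N -> cost node w (deviate k lam) = cost (child k) w lam.
Proof.
move=> hk; rewrite cost_node (bigD1 (Ordinal hk)) //= big1 ?addr0 => [|j ne_jk].
  by apply: eq_big_seq => l hl; rewrite /deviate hl.
rewrite /cost big1_seq // => l /andP[_ hl]; rewrite /deviate ifN ?D_xx ?mulr0 //.
apply: contra ne_jk => hlk; apply/eqP/val_inj => /=.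
exact: leaves_child_disjoint uniq_node (ltn_ord j) hk hl hlk.
Qed.

Lemma alt_deviate k lam : m != A -> (k < n)%N -> alt (child k) lam -> alt node (deviate k lam).
Proof.
move=> mA hk [Xlam alt_k]; split.
  by move=> l hl; rewrite /deviate; case: ifP => [/Xlam|_]; last exact: X_mu.
rewrite wins_node_neq ?(wf_node_size wf_node) // (negbTE mA).
apply/(has_nthP (dtree L)); exists k => //.
by rewrite /wins (@eq_Vval _ _ _ _ lam) // => l hl; rewrite /deviate hl.
Qed.

Lemma value_le_P ds (dc : nat -> R) : m = A ->
  (forall j, (j < n)%N -> value_le (child j) (dc j)) ->
  (forall j, (j < n)%N -> dc j <= ds) -> value_le node ds.
Proof.
move=> mA le_dc dc_le w eps w0 eps0.
have n0 : (0 < n)%N := wf_node_size wf_node.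
have eps_n0 : 0 < eps / n%:R by rewrite divr_gt0 // ltr0n.
have /choice[f Hf] : forall j, exists lam, (j < n)%N ->
    alt (child j) lam /\ cost (child j) w lam <= dc j * mass (child j) w + eps / n%:R.
  move=> j; case: (ltnP j n) => hj; last by exists mu.
  have [lam ? ?] := le_dc j hj w _ (sub_in1 (sub_leaves_child m hj) w0) eps_n0.
  by exists lam.
exists (glue f); first by apply: alt_glue => // j /Hf[].
rewrite cost_glue; apply: le_trans; first by apply: ler_sum => j _; exact: (Hf j (ltn_ord j)).2.
rewrite big_split sumr_const card_ord.
have -> : eps / n%:R *+ n = eps by rewrite -mulr_natr divfK // pnatr_eq0 -lt0n.
rewrite lerD2r (big_leaves_node m cs) mulr_sumr; apply: ler_sum => j _.
apply: ler_wpM2r; last exact: dc_le.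
rewrite big_seq; apply: sumr_ge0 => l hl; apply: w0.
exact: sub_leaves_child (ltn_ord j) _ hl.
Qed.

Lemma value_le_Q ds (dc : nat -> R) : m != A ->
  (forall j, (j < n)%N -> value_le (child j) (dc j)) ->
  (forall w, {in leaves node, forall l, 0 <= w l} ->
     exists2 k, (k < n)%N & dc k * mass (child k) w <= ds * mass node w) ->
  value_le node ds.
Proof.
move=> mA le_dc best w eps w0 eps0.
have [k hk le_k] := best w w0.
have [lam alt_k cost_k] := le_dc k hk w eps (sub_in1 (sub_leaves_child m hk) w0) eps0.
exists (deviate k lam); first exact: alt_deviate.
by rewrite cost_deviate //; apply: le_trans cost_k _; rewrite lerD2r.
Qed.

Section Mixture.
Variables (alpha : nat -> R) (wc : nat -> L -> R) (ws : L -> R).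
Hypothesis alpha_ge0 : forall j, (j < n)%N -> 0 <= alpha j.
Hypothesis Delta_wc : forall j, (j < n)%N -> Delta (child j) (wc j).
Hypothesis ws_mix :
  forall j, (j < n)%N -> {in leaves (child j), forall l, ws l = alpha j * wc j l}.

Lemma mix_ge0 : {in leaves node, forall l, 0 <= ws l}.
Proof.
move=> l /mem_leaves_node[j hj hl]; rewrite (ws_mix hj hl).
by rewrite mulr_ge0 ?alpha_ge0 //; case: (Delta_wc hj) => + _; apply.
Qed.

Lemma cost_mix j lam : (j < n)%N -> cost (child j) ws lam = alpha j * cost (child j) (wc j) lam.
Proof.
by move=> hj; rewrite /cost mulr_sumr; apply: eq_big_seq => l hl; rewrite (ws_mix hj hl) mulrA.
Qed.

Lemma Delta_mix : \sum_(j < n) alpha j = 1 -> Delta node ws.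
Proof.
move=> alpha1; split; first exact: mix_ge0.
rewrite big_leaves_node -[RHS]alpha1; apply: eq_bigr => j _.
have [_ mass1] := Delta_wc (ltn_ord j).
rewrite -[alpha j]mulr1 -mass1 mulr_sumr; apply: eq_big_seq => l hl.
by rewrite (ws_mix (ltn_ord j) hl).
Qed.

Lemma value_ge_mix ds (dc : nat -> R) :
  (forall j, (j < n)%N -> value_ge (child j) (wc j) (dc j)) ->
  (forall lam, alt node lam ->
     exists2 j, (j < n)%N & alt (child j) lam /\ ds <= alpha j * dc j) ->
  value_ge node ws ds.
Proof.
move=> ge_dc flip lam alt_lam; have [j hj [alt_j le_ds]] := flip lam alt_lam.
apply: le_trans le_ds _; apply: le_trans (cost_child_le hj mix_ge0 alt_lam.1).
by rewrite cost_mix // ler_wpM2l ?alpha_ge0 ?ge_dc.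
Qed.
End Mixture.

Variables (dcs : seq R) (wcs : seq (L -> R)).
Local Notation dc j := (nth 0 dcs j).
Local Notation wc j := (nth (fun=> 0) wcs j).
Hypothesis child_optimal : forall j, (j < n)%N -> optimal (child j) (dc j) (wc j).

Let Delta_wc j (hj : (j < n)%N) : Delta (child j) (wc j).
Proof. by case: (child_optimal hj). Qed.
Let value_ge_wc j (hj : (j < n)%N) : value_ge (child j) (wc j) (dc j).
Proof. by case: (child_optimal hj). Qed.
Let value_le_dc j (hj : (j < n)%N) : value_le (child j) (dc j).
Proof. by case: (child_optimal hj). Qed.

Lemma optimal_P i ds ws : m = A -> (i < n)%N -> dc i = ds ->
  (forall j, (j < n)%N -> dc j <= ds) ->
  (if 0 < ds then
     {in leaves (child i), ws =1 wc i} /\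
     (forall j, (j < n)%N -> j != i -> {in leaves (child j), forall l, ws l = 0})
   else Delta node ws) ->
  optimal node ds ws.
Proof.
move=> mA hi dsE dc_le; have le_ds := value_le_P mA value_le_dc dc_le.
case: ifP => [ds_gt0 [ws_i ws_j] | /negbT ds_le0 Dws]; last first.
  by split=> //; apply: value_ge_nonpos => //; rewrite leNgt.
pose alpha j : R := (j == i)%:R.
have ws_mix j : (j < n)%N -> {in leaves (child j), forall l, ws l = alpha j * wc j l}.
  move=> hj l hl; rewrite /alpha; case: eqVneq => [ji | ne_ji].
    by rewrite mul1r ws_i // -ji.
  by rewrite mul0r (ws_j j).
have alpha_ge0 j : (j < n)%N -> 0 <= alpha j by rewrite ler0n.
split=> //.
- apply: (Delta_mix alpha_ge0 Delta_wc ws_mix).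
  rewrite (bigD1 (Ordinal hi)) //= /alpha eqxx big1 ?addr0 // => j.
  by rewrite -val_eqE => /negbTE ->.
- apply: (value_ge_mix alpha_ge0 Delta_wc ws_mix value_ge_wc) => lam alt_lam.
  by exists i => //; rewrite /alpha eqxx mul1r dsE; split=> //; exact: alt_child_P.
Qed.

Hypothesis size_dcs : size dcs = n.

Lemma optimal_Q_harmonic ds ws : m != A -> all (fun x => 0 < x) dcs ->
  ds = 1 / \sum_(x <- dcs) 1 / x ->
  (forall j, (j < n)%N -> {in leaves (child j), forall l,
     ws l = wc j l / dc j / \sum_(x <- dcs) 1 / x}) ->
  optimal node ds ws.
Proof.
move=> mA dcs_gt0 dsE wsE; set S := \sum_(x <- dcs) 1 / x in dsE wsE.
have dc_gt0 j : (j < n)%N -> 0 < dc j.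
  by move=> hj; apply: (all_nthP 0 dcs_gt0); rewrite size_dcs.
have SE : S = \sum_(j < n) (dc j)^-1.
  by rewrite /S (big_nth 0) size_dcs big_mkord; apply: eq_bigr => j _; rewrite div1r.
have n0 : (0 < n)%N := wf_node_size wf_node.
have S_gt0 : 0 < S.
  rewrite SE (bigD1 (Ordinal n0)) //= ltr_pwDl ?invr_gt0 ?dc_gt0 //.
  by apply: sumr_ge0 => j _; rewrite invr_ge0 ltW ?dc_gt0.
pose alpha j := (dc j)^-1 / S.
have alpha_ge0 j : (j < n)%N -> 0 <= alpha j.
  by move=> hj; apply: divr_ge0; [rewrite invr_ge0; exact/ltW/dc_gt0 | exact: ltW].
have ws_mix j : (j < n)%N -> {in leaves (child j), forall l, ws l = alpha j * wc j l}.
  by move=> hj l hl; rewrite (wsE _ hj _ hl) /alpha [RHS]mulrC mulrA.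
have alpha_dc j : (j < n)%N -> alpha j * dc j = ds.
  by move=> hj; rewrite dsE /alpha mulrAC mulVf ?gt_eqF ?dc_gt0 // div1r.
split.
- apply: (Delta_mix alpha_ge0 Delta_wc ws_mix).
  by rewrite -mulr_suml -SE divff ?gt_eqF.
- apply: (value_ge_mix alpha_ge0 Delta_wc ws_mix value_ge_wc) => lam.
  by case/alt_child_Q=> // j hj alt_j; exists j; rewrite ?alpha_dc.
- apply: value_le_Q value_le_dc _ => // w w0.
  have [k le_k] := exists_le_harmonic (fun j : 'I_n => mass (child j) w) n0
    (fun j => dc_gt0 j (ltn_ord j)).
  by exists k => //; rewrite dsE div1r [X in _ <= X]mulrC ler_pdivlMr // SE big_leaves_node.
Qed.

Lemma optimal_Q_degenerate ds ws : m != A -> ~~ all (fun x => 0 < x) dcs ->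
  ds = 0 -> Delta node ws -> optimal node ds ws.
Proof.
move=> mA /allPn[x x_dcs x_le0] -> Dws; split=> //; first exact: value_ge_nonpos.
have [k hk dc_k] := nthP 0 x_dcs; rewrite size_dcs in hk.
apply: value_le_Q value_le_dc _ => // w w0; exists k => //.
rewrite mul0r dc_k; apply: mulr_le0_ge0; first by rewrite leNgt.
by rewrite big_seq; apply: sumr_ge0 => l hl; apply: w0; exact: sub_leaves_child hk _ hl.
Qed.
End Node.

Lemma optimal_rec s ds ws : Rec D mu theta A s ds ws ->
  wf_tree s -> uniq (leaves s) -> {in leaves s, forall l, X (mu l)} -> optimal s ds ws.
Proof.
elim=> [l ds' ws' -> wl | m cs dcs wcs ds' ws' i mA _ _ _ IH hi dsE dc_le Hws
       | m cs dcs wcs ds' ws' mA size_dcs _ _ IH Hws] wf u Xmu.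
- by apply: optimal_leaf => //; apply: Xmu; rewrite inE.
- have opt j (hj : (j < size cs)%N) :=
    IH j hj (wf_child wf hj) (uniq_leaves_child u hj) (sub_in1 (sub_leaves_child m hj) Xmu).
  exact: (optimal_P wf u Xmu opt mA hi dsE dc_le Hws).
- have opt j (hj : (j < size cs)%N) :=
    IH j hj (wf_child wf hj) (uniq_leaves_child u hj) (sub_in1 (sub_leaves_child m hj) Xmu).
  case: ifP Hws => [dcs_gt0 [dsE wsE] | /negbT dcs_le0 [ds0 Dws]].
  + exact: (optimal_Q_harmonic wf u Xmu opt size_dcs mA dcs_gt0 dsE wsE).
  + exact: (optimal_Q_degenerate wf u Xmu opt size_dcs mA dcs_le0 ds0 Dws).
Qed.

Lemma inf_alt_le s ds w : value_le s ds -> {in leaves s, forall l, 0 <= w l} ->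
  (inf_alt X D theta A mu s w <= (ds * mass s w)%:E)%E.
Proof.
move=> le_ds w0; apply/lee_addgt0Pr => eps eps0.
have [lam alt_lam cost_le] := le_ds w eps w0 eps0.
apply: (@le_trans _ _ (cost s w lam)%:E); first by apply: ereal_inf_lbound; exists lam.
by rewrite -EFinD lee_fin.
Qed.

Lemma inf_alt_ge s ds ws : value_ge s ws ds -> (ds%:E <= inf_alt X D theta A mu s ws)%E.
Proof. by move=> ge_ds; apply/ereal_infP => _ [lam alt_lam <-]; rewrite lee_fin ge_ds. Qed.

Lemma optimal_maxmin s ds ws : optimal s ds ws ->
  [/\ ds%:E = ereal_sup [set inf_alt X D theta A mu s w | w in Delta s], Delta s ws &
      inf_alt X D theta A mu s ws = ds%:E].
Proof.
move=> [Dws ge_ds le_ds].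
have le_ds_Delta w : Delta s w -> (inf_alt X D theta A mu s w <= ds%:E)%E.
  by case=> w0 w1; have := inf_alt_le le_ds w0; rewrite w1 mulr1.
have inf_ws : inf_alt X D theta A mu s ws = ds%:E.
  by apply/le_anti; rewrite le_ds_Delta ?inf_alt_ge.
split=> //; apply/le_anti/andP; split.
  by rewrite -inf_ws; apply: ereal_sup_ubound; exists ws.
by apply: ge_ereal_sup => _ [w Dw <-]; apply: le_ds_Delta.
Qed.
End MaxMinValue.

Section KullbackLeibler.
Variables (R : realType) (Th : set R) (b : R -> R).
Hypothesis fam : expfam Th b.
Local Notation mean := (derive1 b).
Local Notation X := (meanset Th b).
Local Notation natp := (natpar Th b).
Local Notation KL := (KL Th b).

Lemma expfam_mvt (f : R -> R) (a c : R) : (forall t, Th t -> derivable f t 1) ->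
  Th a -> Th c -> a <= c ->
  exists2 xi, Th xi /\ a <= xi <= c & f c - f a = derive1 f xi * (c - a).
Proof.
move=> df Ta Tc ac; have [_ _ Th_conv _] := fam.
have Th_itv t : t \in `[a, c] -> Th t by rewrite in_itv; apply: Th_conv.
have [xi xi_ac E] := MVT_segment ac
  (fun x x_ac => derivableP (df x (Th_itv x (subset_itv_oo_cc x_ac))))
  (derivable_within_continuous (fun x x_ac => df x (Th_itv x x_ac))).
exists xi; last by rewrite derive1E.
by split; [exact: Th_itv | move: xi_ac; rewrite in_itv].
Qed.

Lemma mean_lt a c : Th a -> Th c -> a < c -> mean a < mean c.
Proof.
move=> Ta Tc ac; have [_ _ _ [_ dmean mean'_gt0]] := fam.
have [xi [Txi _] E] := expfam_mvt dmean Ta Tc (ltW ac).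
by rewrite -subr_gt0 E mulr_gt0 ?mean'_gt0 ?subr_gt0.
Qed.

Lemma mean_le a c : Th a -> Th c -> (mean a <= mean c) = (a <= c).
Proof.
move=> Ta Tc; case: (ltgtP a c) => [ac|ca|->]; rewrite ?lexx //.
- by rewrite ltW // mean_lt.
- by apply/negbTE; rewrite -ltNge mean_lt.
Qed.

Lemma natparP x : X x -> Th (natp x) /\ mean (natp x) = x.
Proof. by case=> t Tt tx; apply: (@xgetPex _ 0 [set t | Th t /\ mean t = x]); exists t. Qed.

Lemma natpar_mean t : Th t -> natp (mean t) = t.
Proof.
move=> Tt; have [Tnt E] := natparP (ex_intro2 _ _ t Tt erefl).
by apply/le_anti; rewrite -(mean_le Tnt Tt) -(mean_le Tt Tnt) E lexx.
Qed.

Lemma natpar_le x y : X x -> X y -> x <= y -> natp x <= natp y.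
Proof.
move=> Xx Xy; have [Tx Ex] := natparP Xx; have [Ty Ey] := natparP Xy.
by rewrite -(mean_le Tx Ty) Ex Ey.
Qed.

Lemma KL_xx x : KL x x = 0.
Proof. by rewrite /KL !subrr mulr0 subr0. Qed.

(* [x] enters [KL x _] only through a linear term, so the mean value theorem for [b] suffices. *)
Lemma KL_diff x y z : X y -> X z -> y <= z ->
  exists2 xi, Th xi /\ y <= mean xi <= z & KL x z - KL x y = (mean xi - x) * (natp z - natp y).
Proof.
move=> Xy Xz yz; have [Ty Ey] := natparP Xy; have [Tz Ez] := natparP Xz.
have [_ _ _ [db _ _]] := fam.
have [xi [Txi /andP[yxi xiz]] E] := expfam_mvt db Ty Tz (natpar_le Xy Xz yz).
exists xi; first by rewrite -{1}Ey -Ez (mean_le Ty Txi) (mean_le Txi Tz) yxi xiz.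
have bE : b (natp z) = b (natp y) + mean xi * (natp z - natp y) by rewrite -E; ring.
by rewrite /KL /= bE; ring.
Qed.

Lemma KL_le_between x y z : X y -> X z -> (y <= z <= x) || (x <= z <= y) -> KL x z <= KL x y.
Proof.
move=> Xy Xz /orP[/andP[yz zx] | /andP[xz zy]].
- have [xi [_ /andP[_ xiz]] E] := KL_diff x Xy Xz yz.
  rewrite -subr_le0 E mulr_le0_ge0 ?subr_ge0 ?natpar_le //.
  by rewrite subr_le0 (le_trans xiz).
- have [xi [_ /andP[zxi _]] E] := KL_diff x Xz Xy zy.
  rewrite -subr_ge0 E mulr_ge0 ?subr_ge0 ?natpar_le //.
  exact: le_trans zxi.
Qed.

Lemma KL_ge0 x y : X x -> X y -> 0 <= KL x y.
Proof.
move=> Xx Xy; rewrite -(KL_xx x).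
by apply: KL_le_between; case: (leP y x) => [yx|/ltW xy]; rewrite ?lexx ?yx ?xy ?orbT.
Qed.

Lemma KL_approx_below x theta eps : X theta -> 0 < eps ->
  exists y, [/\ X y, y < theta & KL x y <= KL x theta + eps].
Proof.
move=> Xth eps0; have [Tth Eth] := natparP Xth; set tt := natp theta in Tth Eth.
have [open_Th _ _ _] := fam.
have /nbhs_ballP[e /= e0 ball_Th] : nbhs tt Th by apply: open_nbhs_nbhs.
have Th_near t : tt - e < t <= tt -> Th t.
  move=> /andP[lt le]; apply: ball_Th; rewrite -ball_normE /ball_ /= ger0_norm; lra.
set t0 := tt - e / 2; have Tt0 : Th t0 by apply: Th_near; rewrite /t0; lra.
set M := `|mean t0 - x|.
set del := Num.min (e / 2) (eps / (M + 1)).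
have M0 : 0 <= M := normr_ge0 _.
have del_gt0 : 0 < del by rewrite lt_min; apply/andP; split; apply: divr_gt0 => //; lra.
have del_e : del <= e / 2 by rewrite ge_min lexx.
have del_eps : del <= eps / (M + 1) by rewrite ge_min lexx orbT.
have Tt : Th (tt - del) by apply: Th_near; lra.
have t_lt : mean (tt - del) < theta by rewrite -Eth mean_lt //; lra.
have Xt : X (mean (tt - del)) by exists (tt - del).
exists (mean (tt - del)); split=> //.
have [xi [_ /andP[t_xi _]] E] := KL_diff x Xt Xth (ltW t_lt).
rewrite natpar_mean // -/tt in E.
have gap : x - mean xi <= M.
  have : mean t0 <= mean (tt - del) by rewrite mean_le // /t0; lra.
  have : x - mean t0 <= M by rewrite /M distrC ler_norm.
  lra.
have gap_del := ler_wpM2r (ltW del_gt0) gap.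
have M_del : M * del <= eps.
  have epsE : eps / (M + 1) * (M + 1) = eps by rewrite divfK // gt_eqF //; lra.
  nra.
lra.
Qed.

Lemma KL_threshold_le (A : bool) x y theta : X y -> X theta ->
  (theta <= x) == A -> (theta <= y) != A -> KL x theta <= KL x y.
Proof.
move=> Xy Xth xA yA; apply: KL_le_between => //.
move: xA yA; case: (leP theta x) => hx; case: (leP theta y) => hy; case: A => //= _ _.
- by rewrite (ltW hy).
- by rewrite (ltW hx) orbT.
Qed.

Lemma KL_threshold_approx (A : bool) x theta eps : X theta -> 0 < eps -> (theta <= x) == A ->
  exists y, [/\ X y, (theta <= y) != A & KL x y <= KL x theta + eps].
Proof.
move=> Xth eps0; case: A => _.
- by have [y [Xy y_lt le_eps]] := KL_approx_below x Xth eps0; exists y; rewrite leNgt y_lt.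
- by exists theta; rewrite lexx lerDl ltW.
Qed.
End KullbackLeibler.

Theorem theorem2 (R : realType) (L : eqType) (Th : set R) (b : R -> R)
  (theta : R) (T : tree L) (mu : L -> R) :
  expfam Th b ->
  wf_tree T -> uniq (leaves T) ->
  meanset Th b theta ->
  (forall l, l \in leaves T -> meanset Th b (mu l)) ->
  forall (s : tree L), subtree s T ->
  forall (ds : R) (ws : L -> R),
    Rec (KL Th b) mu theta (wins theta T mu) s ds ws ->
    [/\ ds%:E = ereal_sup [set inf_alt (meanset Th b) (KL Th b) theta
                                 (wins theta T mu) mu s w | w in Delta s],
        Delta s ws &
        inf_alt (meanset Th b) (KL Th b) theta (wins theta T mu) mu s ws = ds%:E].
Proof.
move=> fam wf u Xtheta Xmu s sub ds ws rec.
have [wfs us sub_leaves] := subtree_wf_uniq sub wf u.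
apply: optimal_maxmin; apply: (optimal_rec _ _ _ _ rec) => //.
- exact: KL_xx.
- exact: KL_ge0.
- by move=> x y _ Xy; apply: KL_threshold_le.
- by move=> x eps _; apply: KL_threshold_approx.
- exact: (sub_in1 sub_leaves Xmu).
Qed.
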